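(* Let $(H_1,+_1,\circ_1)$ and $(H_2,+_2,\circ_2)$ be commutative multiplicative hyperrings with identities $1_{H_1},1_{H_2}$, and let $P_1$ and $P_2$ be nonzero proper strong $\mathcal{C}$-hyperideals of $H_1$ and $H_2$, respectively. Then $P_1\times P_2$ is an sdf-absorbing hyperideal of $H_1\times H_2$ if and only if $P_1$ and $P_2$ are sdf-absorbing hyperideals of $H_1$ and $H_2$, respectively, and $1_{H_1}+1_{H_1}\in P_1$ or $1_{H_2}+1_{H_2}\in P_2$.
   Context: A commutative multiplicative hyperring $(H,+,\circ)$ consists of an abelian group $(H,+)$ and an associative, commutative hyperoperation $\circ: H\times H\to P^*(H)$ with $x\circ(y+z)\subseteq x\circ y+x\circ z$ and $x\circ(-y)=-(x\circ y)=(-x)\circ y$. For subsets $A,B$, $A\circ B=\bigcup_{a\in A,b\in B}a\circ b$, $A\pm B=\{a\pm b\}$; $x^2=x\circ x$. Identity: $x\in x\circ 1$ for all $x$. $H_1\times H_2$ is the hyperring with $(x_1,x_2)+(y_1,y_2)=(x_1+_1y_1,x_2+_2y_2)$ and $(x_1,x_2)\circ(y_1,y_2)=\{(a,b): a\in x_1\circ_1y_1, b\in x_2\circ_2y_2\}$. A hyperideal is a nonempty $P$ with $x-y\in P$ and $r\circ x\subseteq P$ for $x,y\in P$, $r\in H$. Let $\mathcal{C}=\{c_1\circ\cdots\circ c_n: c_i\in H\}$ and $\mathfrak{C}=\{\sum_{i=1}^m C_i: C_i\in\mathcal{C}\}$; $P$ is a strong $\mathcal{C}$-hyperideal if for every $D\in\mathfrak{C}$,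 $D\cap P\neq\varnothing$ implies $D\subseteq P$. A proper hyperideal $P$ is sdf-absorbing if whenever $x,y$ are nonzero and $x^2-y^2\subseteq P$, then $x-y\in P$ or $x+y\in P$. *)

From mathcomp Require Import all_boot all_algebra.
Set Implicit Arguments. Unset Strict Implicit. Unset Printing Implicit Defensive.
Import GRing.Theory.
Local Open Scope ring_scope.

(* A hyperoperation on H is encoded as a ternary relation:
   [hm x y z] means  z \in x o y. Subsets of H are predicates H -> Prop. *)
Definition hyperop (H : Type) := H -> H -> H -> Prop.

Section Hyperring.
Variables (H : zmodType) (hm : hyperop H).

Record is_cm_hyperring : Prop := IsCMHyperring {
  hm_nonempty : forall x y, exists z, hm x y z;
  hm_assoc : forall x y z w,
    (exists a, hm y z a /\ hm x a w) <-> (exists a, hm x y a /\ hm a z w);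
  hm_comm : forall x y z, hm x y z <-> hm y x z;
  hm_distr : forall x y z w, hm x (y + z) w ->
    exists a b, hm x y a /\ hm x z b /\ w = a + b;
  hm_oppr : forall x y w, hm x (- y) w <-> hm x y (- w);
  hm_oppl : forall x y w, hm (- x) y w <-> hm x y (- w)
}.

Definition is_identity (one : H) : Prop := forall x, hm x one x.

Definition is_hyperideal (P : H -> Prop) : Prop :=
  (exists x, P x) /\
  (forall x y, P x -> P y -> P (x - y)) /\
  (forall r x z, P x -> hm r x z -> P z).

Definition proper_set (P : H -> Prop) : Prop := exists x, ~ P x.
Definition nonzero_set (P : H -> Prop) : Prop := exists x, P x /\ x <> 0.

(* c_1 o c_2 o ... o c_n for the list [c_1; ...; c_n], n >= 1 *)
Fixpoint hprod (c : H) (s : seq H) : H -> Prop :=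
  match s with
  | [::] => fun z => z = c
  | d :: s' => fun z => exists a, hprod d s' a /\ hm c a z
  end.

(* C_1 + ... + C_m for the list of C_i (each given by a nonempty list), m >= 1 *)
Fixpoint hsum (C : H * seq H) (Cs : seq (H * seq H)) : H -> Prop :=
  match Cs with
  | [::] => hprod C.1 C.2
  | D :: Cs' => fun z => exists a b,
      hprod C.1 C.2 a /\ hsum D Cs' b /\ z = a + b
  end.

Definition strong_C_hyperideal (P : H -> Prop) : Prop :=
  is_hyperideal P /\
  forall C Cs, (exists d, hsum C Cs d /\ P d) -> forall d, hsum C Cs d -> P d.

Definition sq_diff (x y : H) : H -> Prop :=
  fun z => exists a b, hm x x a /\ hm y y b /\ z = a - b.

Definition sdf_absorbing (P : H -> Prop) : Prop :=
  is_hyperideal P /\ proper_set P /\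
  forall x y, x <> 0 -> y <> 0 ->
    (forall z, sq_diff x y z -> P z) -> P (x - y) \/ P (x + y).

End Hyperring.

Definition prod_hm (H1 H2 : zmodType) (m1 : hyperop H1) (m2 : hyperop H2)
  : hyperop (H1 * H2)%type :=
  fun x y z => m1 x.1 y.1 z.1 /\ m2 x.2 y.2 z.2.

Definition prod_set (H1 H2 : Type) (P1 : H1 -> Prop) (P2 : H2 -> Prop)
  : (H1 * H2)%type -> Prop := fun z => P1 z.1 /\ P2 z.2.

(* Squares in H1 x H2 are computed componentwise, so testing P1 x P2 on pairs
   (x, 0), (y, 0) shows that P1 (and symmetrically P2) is sdf-absorbing.  In a
   strong C-hyperideal the set u^2 - u^2 is a C-sum meeting P at 0, hence lies
   in P; applied to (u, v) and (u, -v), whose squares therefore differ inside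
   P1 x P2, sdf-absorption yields (0, 2v) or (2u, 0) in P1 x P2, i.e.
   1 + 1 in P2 or in P1.  Conversely, if 1 + 1 is in P1 then so is u o (1 + 1),
   and by strongness all of u + u; then x1 - y1 and x1 + y1 lie in P1
   together, so whichever of x2 - y2, x2 + y2 lies in P2, the pair does. *)

From Stdlib Require Import Setoid.
From HB Require Import structures.
From mathcomp Require Import all_boot all_algebra.
Import GRing.Theory.
Local Open Scope ring_scope.
Set Implicit Arguments. Unset Strict Implicit.

Section Hyperideal.
Variables (H : zmodType) (hm : hyperop H) (P : H -> Prop).
Hypothesis hP : is_hyperideal hm P.

Lemma hyperideal0 : P 0.
Proof. by case: hP => [[x Px] [PB _]]; rewrite -(subrr x); apply: PB. Qed.

Lemma hyperidealB x y : P x -> P y -> P (x - y).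
Proof. by case: hP => _ [PB _]; apply: PB. Qed.

Lemma hyperidealN x : P x -> P (- x).
Proof. by move=> Px; rewrite -sub0r; apply: hyperidealB (hyperideal0) Px. Qed.

Lemma hyperidealD x y : P x -> P y -> P (x + y).
Proof. by move=> Px Py; rewrite -[y]opprK; apply/hyperidealB/hyperidealN. Qed.

Lemma hyperidealM r x z : P x -> hm r x z -> P z.
Proof. by case: hP => _ [_ PM]; apply: PM. Qed.

Lemma hyperideal_sq_diff x y z : P x -> P y -> sq_diff hm x y z -> P z.
Proof.
move=> Px Py [a [b [xxa [yyb ->]]]].
by apply: hyperidealB; [apply: hyperidealM Px xxa | apply: hyperidealM Py yyb].
Qed.

Lemma hyperideal_subr_addr x y : P (y + y) -> P (x - y) <-> P (x + y).
Proof.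
move=> P2y; split=> [Pxy|Pxy].
  have -> : x + y = (x - y) + (y + y) by rewrite addrA addrNK.
  exact: hyperidealD.
have -> : x - y = (x + y) - (y + y) by rewrite opprD addrA addrK.
exact: hyperidealB.
Qed.

End Hyperideal.

Section Hyperring.
Variables (H : zmodType) (hm : hyperop H).
Hypothesis hmR : is_cm_hyperring hm.

Lemma hmNN x y z : hm (- x) (- y) z <-> hm x y z.
Proof. by rewrite (hm_oppl hmR) (hm_oppr hmR) opprK. Qed.

Lemma sq_diff_oppr x y z : sq_diff hm x (- y) z <-> sq_diff hm x y z.
Proof.
by split=> -[a [b [xxa [yyb ->]]]]; exists a, b; rewrite ?hmNN in yyb *.
Qed.

Lemma identity_notin (one : H) P :
  is_hyperideal hm P -> proper_set P -> is_identity hm one -> ~ P one.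
Proof. by move=> hP [x Nx] one_id P1; apply/Nx/(hyperidealM hP P1 (one_id x)). Qed.

Lemma identity_neq0 (one : H) P :
  is_hyperideal hm P -> proper_set P -> is_identity hm one -> one != 0.
Proof.
move=> hP prP one_id; apply/eqP=> one0.
by apply: (identity_notin hP prP one_id); rewrite one0; apply: hyperideal0 hP.
Qed.

(* The strongness hypothesis applies because x^2 - y^2 is the C-sum
   x o x + (-y) o y. *)
Lemma strong_C_sq_diff P x y :
  strong_C_hyperideal hm P ->
  (exists d, sq_diff hm x y d /\ P d) -> forall d, sq_diff hm x y d -> P d.
Proof.
move=> [_ Pstrong] [d0 [sq_d0 Pd0]] d sq_d.
have sq_diff_hsum z : sq_diff hm x y z -> hsum hm (x, [:: x]) [:: (- y, [:: y])] z.
  move=> [a [b [xxa [yyb ->]]]]; exists a, (- b); split; first by exists x.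
  by split=> //; exists y; rewrite (hm_oppl hmR) opprK.
by apply: Pstrong (sq_diff_hsum _ sq_d); exists d0; split=> //; apply: sq_diff_hsum.
Qed.

Lemma strong_C_sq_diff_self P x z :
  strong_C_hyperideal hm P -> sq_diff hm x x z -> P z.
Proof.
move=> sP; apply: strong_C_sq_diff => //.
have [c xxc] := hm_nonempty hmR x x.
by exists (c - c); split; [exists c, c | rewrite subrr; apply: hyperideal0 sP.1].
Qed.

(* u o (1 + 1) is contained in u + u, a C-sum of the two singletons u o 1. *)
Lemma strong_C_double P one :
  strong_C_hyperideal hm P -> is_identity hm one -> P (one + one) ->
  forall u, P (u + u).
Proof.
move=> [hP Pstrong] one_id P2 u.
have [w uw] := hm_nonempty hmR u (one + one).
have [a [b [ua [ub w_ab]]]] := hm_distr hmR uw.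
apply: (Pstrong (u, [:: one]) [:: (u, [:: one])]).
  exists w; split; last exact: (hyperidealM hP P2 uw).
  by exists a, b; rewrite w_ab; split; [exists one | split; first exists one].
by exists u, u; split; [exists one | split; first exists one].
Qed.

Lemma sdf_absorbing_sq_mem P u :
  sdf_absorbing hm P -> nonzero_set P -> (forall a, hm u u a -> P a) -> P u.
Proof.
move=> [hP [_ Pabs]] [p [Pp p0]] Pu2.
have [->|/eqP u0] := eqVneq u 0; first exact: hyperideal0 hP.
have sq_up z : sq_diff hm u p z -> P z.
  move=> [a [b [uua [ppb ->]]]].
  exact: (hyperidealB hP (Pu2 _ uua) (hyperidealM hP Pp ppb)).
have [Pup|Pup] := Pabs u p u0 p0 sq_up.
  by rewrite -(subrK p u); apply: (hyperidealD hP).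
by rewrite -(addrK p u); apply: (hyperidealB hP).
Qed.

Lemma sdf_absorbing_total P x y :
  sdf_absorbing hm P -> nonzero_set P ->
  (forall z, sq_diff hm x y z -> P z) -> P (x - y) \/ P (x + y).
Proof.
move=> sdP nzP Pxy; have [hP _] := sdP.
have [c c00] := hm_nonempty hmR 0 0.
have Pc : P c := hyperidealM hP (hyperideal0 hP) c00.
have [x0|/eqP x0] := eqVneq x 0.
  left; rewrite x0 sub0r; apply: (hyperidealN hP).
  apply: (sdf_absorbing_sq_mem sdP nzP) => b yyb.
  have Pcb : P (c - b) by apply: Pxy; exists c, b; rewrite x0.
  by rewrite -(subKr c b); apply: (hyperidealB hP).
have [y0|/eqP y0] := eqVneq y 0.
  left; rewrite y0 subr0; apply: (sdf_absorbing_sq_mem sdP nzP) => a xxa.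
  have Pac : P (a - c) by apply: Pxy; exists a, c; rewrite y0.
  by rewrite -(subrK c a); apply: (hyperidealD hP).
by case: sdP => _ [_ Pabs]; apply: Pabs.
Qed.

End Hyperring.

Section Transfer.
Variables (H K : zmodType) (hmH : hyperop H) (hmK : hyperop K).
Variables (f : {additive H -> K}) (g : K -> H).
Hypothesis gK : cancel g f.
Hypothesis f_hm : forall x y z, hmK (f x) (f y) (f z) <-> hmH x y z.

Variables (P : H -> Prop) (Q : K -> Prop).
Hypothesis fQ : forall x, Q (f x) <-> P x.

Lemma hyperideal_transfer : is_hyperideal hmH P -> is_hyperideal hmK Q.
Proof.
have QP x : Q x -> P (g x) by rewrite -{1}(gK x) fQ.
move=> [[p Pp] [PB PM]]; split; first by exists (f p); rewrite fQ.
split=> [x y Qx Qy | r x z Qx rxz].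
  by rewrite -[x]gK -[y]gK -raddfB fQ; apply: PB; apply: QP.
rewrite -[z]gK fQ; apply: (PM (g r) (g x)); first exact: QP.
by rewrite -f_hm !gK.
Qed.

Lemma sdf_absorbing_transfer : sdf_absorbing hmH P -> sdf_absorbing hmK Q.
Proof.
move=> [hP [[p Pp] Pabs]].
split; first exact: hyperideal_transfer hP.
split; first by exists (f p); rewrite fQ.
move=> x y; rewrite -[x]gK -[y]gK -raddfB -raddfD !fQ => x0 y0 Qxy.
apply: Pabs => [gx0|gy0|z [a [b [xxa [yyb ->]]]]].
- by apply: x0; rewrite gx0 raddf0.
- by apply: y0; rewrite gy0 raddf0.
by rewrite -fQ raddfB; apply: Qxy; exists (f a), (f b); rewrite !f_hm.
Qed.

End Transfer.

HB.instance Definition _ (H1 H2 : zmodType) :=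
  GRing.isZmodMorphism.Build (H1 * H2)%type (H2 * H1)%type swap_pair
    (fun _ _ => erefl).

Section Product.
Variables (H1 H2 : zmodType) (m1 : hyperop H1) (m2 : hyperop H2).
Hypotheses (R1 : is_cm_hyperring m1) (R2 : is_cm_hyperring m2).
Variables (P1 : H1 -> Prop) (P2 : H2 -> Prop).

Lemma prod_hyperideal :
  is_hyperideal m1 P1 -> is_hyperideal m2 P2 ->
  is_hyperideal (prod_hm m1 m2) (prod_set P1 P2).
Proof.
move=> hP1 hP2; split.
  by case: hP1.1 => a P1a; case: hP2.1 => b P2b; exists (a, b).
split=> [x y [P1x P2x] [P1y P2y] | r x z [P1x P2x] [rxz1 rxz2]].
  by split; [apply: (hyperidealB hP1) | apply: (hyperidealB hP2)].
by split; [apply: (hyperidealM hP1 P1x rxz1) | apply: (hyperidealM hP2 P2x rxz2)].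
Qed.

Lemma sq_diff_prod (x y : H1 * H2) :
  (forall z, sq_diff (prod_hm m1 m2) x y z -> prod_set P1 P2 z) <->
  (forall z, sq_diff m1 x.1 y.1 z -> P1 z) /\
  (forall z, sq_diff m2 x.2 y.2 z -> P2 z).
Proof.
split=> [Pxy | [P1xy P2xy] z [a [b [[xxa1 xxa2] [[yyb1 yyb2] ->]]]]]; last first.
  by split; [apply: P1xy; exists a.1, b.1 | apply: P2xy; exists a.2, b.2].
have [a2 xxa2] := hm_nonempty R2 x.2 x.2; have [b2 yyb2] := hm_nonempty R2 y.2 y.2.
have [a1 xxa1] := hm_nonempty R1 x.1 x.1; have [b1 yyb1] := hm_nonempty R1 y.1 y.1.
split=> z [a [b [xxa [yyb ->]]]].
  have /Pxy[] // : sq_diff (prod_hm m1 m2) x y ((a, a2) - (b, b2)).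
  by exists (a, a2), (b, b2).
have /Pxy[] // : sq_diff (prod_hm m1 m2) x y ((a1, a) - (b1, b)).
by exists (a1, a), (b1, b).
Qed.

Lemma sdf_absorbing_prod_fst :
  is_hyperideal m1 P1 -> proper_set P1 -> is_hyperideal m2 P2 ->
  sdf_absorbing (prod_hm m1 m2) (prod_set P1 P2) -> sdf_absorbing m1 P1.
Proof.
move=> hP1 prP1 hP2 [_ [_ Pabs]]; do 2!split=> //.
move=> x y x0 y0 P1xy.
have pair0 u : u <> 0 -> ((u, 0) : H1 * H2) <> 0 by move=> u0 /(congr1 fst).
have [] := Pabs (x, 0) (y, 0) (pair0 _ x0) (pair0 _ y0).
- apply/sq_diff_prod; split=> // z.
  exact: (hyperideal_sq_diff hP2 (hyperideal0 hP2) (hyperideal0 hP2)).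
- by case; left.
- by case; right.
Qed.

Lemma sdf_absorbing_prod_double u v :
  strong_C_hyperideal m1 P1 -> strong_C_hyperideal m2 P2 -> u != 0 ->
  sdf_absorbing (prod_hm m1 m2) (prod_set P1 P2) -> P1 (u + u) \/ P2 (v + v).
Proof.
move=> sP1 sP2 u0 [_ [_ Pabs]].
have nz_pair w : ((u, w) : H1 * H2) <> 0 by move/(congr1 fst)/eqP; apply/negP.
have [] := Pabs (u, v) (u, - v) (nz_pair _) (nz_pair _).
- apply/sq_diff_prod; split=> z; first exact: strong_C_sq_diff_self.
  by rewrite /= sq_diff_oppr //; apply: strong_C_sq_diff_self.
- by case=> _ /=; rewrite opprK; right.
- by case; left.
Qed.

Lemma prod_sdf_absorbing :
  sdf_absorbing m1 P1 -> nonzero_set P1 -> sdf_absorbing m2 P2 -> nonzero_set P2 ->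
  (forall u, P1 (u + u)) -> sdf_absorbing (prod_hm m1 m2) (prod_set P1 P2).
Proof.
move=> sdP1 nzP1 sdP2 nzP2 P1double.
split; first exact: prod_hyperideal sdP1.1 sdP2.1.
split; first by case: sdP1.2.1 => a P1a; exists (a, 0); case.
move=> x y _ _ /sq_diff_prod [P1xy P2xy].
have P1x_y : P1 (x.1 - y.1) /\ P1 (x.1 + y.1).
  have subr_addr := hyperideal_subr_addr sdP1.1 x.1 (P1double y.1).
  by case: (sdf_absorbing_total R1 sdP1 nzP1 P1xy); rewrite ?subr_addr.
by case: (sdf_absorbing_total R2 sdP2 nzP2 P2xy); [left | right]; case: P1x_y.
Qed.

End Product.

Lemma sdf_absorbing_prod_swap (H1 H2 : zmodType) (m1 : hyperop H1)
    (m2 : hyperop H2) (P1 : H1 -> Prop) (P2 : H2 -> Prop) :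
  sdf_absorbing (prod_hm m1 m2) (prod_set P1 P2) ->
  sdf_absorbing (prod_hm m2 m1) (prod_set P2 P1).
Proof.
apply: (sdf_absorbing_transfer (f := swap_pair) swap_pairK).
  by move=> x y z; rewrite /prod_hm and_comm.
by move=> x; rewrite /prod_set and_comm.
Qed.

Theorem mainTheorem14 (H1 H2 : zmodType) (m1 : hyperop H1) (m2 : hyperop H2)
  (one1 : H1) (one2 : H2) (P1 : H1 -> Prop) (P2 : H2 -> Prop) :
  is_cm_hyperring m1 -> is_cm_hyperring m2 ->
  is_identity m1 one1 -> is_identity m2 one2 ->
  nonzero_set P1 -> proper_set P1 -> strong_C_hyperideal m1 P1 ->
  nonzero_set P2 -> proper_set P2 -> strong_C_hyperideal m2 P2 ->
  (sdf_absorbing (prod_hm m1 m2) (prod_set P1 P2) <->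
   (sdf_absorbing m1 P1 /\ sdf_absorbing m2 P2 /\
    (P1 (one1 + one1) \/ P2 (one2 + one2)))).
Proof.
move=> R1 R2 one1_id one2_id nzP1 prP1 sP1 nzP2 prP2 sP2.
have [hP1 hP2] := (sP1.1, sP2.1).
split=> [sdP | [sdP1 [sdP2 [P1two | P2two]]]].
- have sdP_swap := sdf_absorbing_prod_swap sdP.
  split; first exact: (sdf_absorbing_prod_fst R1 R2 hP1 prP1 hP2 sdP).
  split; first exact: (sdf_absorbing_prod_fst R2 R1 hP2 prP2 hP1 sdP_swap).
  apply: (sdf_absorbing_prod_double R1 R2 one2 sP1 sP2 _ sdP).
  exact: (identity_neq0 hP1 prP1 one1_id).
- exact: (prod_sdf_absorbing R1 R2 sdP1 nzP1 sdP2 nzP2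
            (strong_C_double R1 sP1 one1_id P1two)).
- apply: sdf_absorbing_prod_swap.
  exact: (prod_sdf_absorbing R2 R1 sdP2 nzP2 sdP1 nzP1
            (strong_C_double R2 sP2 one2_id P2two)).
Qed.
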